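(* Let $q$ be a prime power, $n\ge1$, and let $C=\langle B_r\rangle\oplus\langle B_t\rangle\subseteq\mathbb{F}_q^n$ be an $\mathbb{F}_q$-linear code, where $B_r$ ($r\times n$) and $B_t$ ($t\times n$) are matrices over $\mathbb{F}_q$ with linearly independent rows, such that $\langle B_t\rangle\subseteq C^{\perp_e}$ and $t=\dim\langle B_t\rangle\ge 2$. Let $A$ be an invertible $t\times t$ matrix over $\mathbb{F}_q$ with no eigenvalue in $\mathbb{F}_q$. Let $c=\mathrm{rank}(HH^T)=\dim C-\dim(C\cap C^{\perp_e})$, where $H$ is any generator matrix of $C$ (the number of maximally entangled states of the EAQECC determined by $C$). Then $D_A$ gives rise to an EAQECC with parameters $[[n,\,n-2r-t+c,\,d';\,c]]_q$, i.e. $c(D_A)=c$, $k(D_A)=n-2r-t+c$, and $d'=d(D_A)\ge\min\left\{\delta_1,\left\lceil\left(1+\frac1q\right)\delta_2\right\rceil\right\}$, where $\delta_1=d_H(C^{\perp_e})$ and $\delta_2=d_H(\langle B_r\rangle^{\perp_e})$.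
   Context: $\mathbb{F}_q$ is the finite field with $q$ elements. $x\cdot_e y=\sum_i x_iy_i$ on $\mathbb{F}_q^n$; $V^{\perp_e}$ is the Euclidean dual; $\langle B\rangle$ is the row space of a matrix $B$; $d_H(V)$ is the minimum Hamming weight of a nonzero vector of $V$. On $\mathbb{F}_q^{2n}$, $(x|y)\cdot_s(z|w)=x\cdot_e w-z\cdot_e y$ and $D^{\perp_s}$ is the symplectic dual. The symplectic weight of $(x|y)$ is $\#\{j:(x_j,y_j)\neq(0,0)\}$; $d_s(S)$ is the minimum symplectic weight of a nonzero element of $S$. For a linear code $D\subseteq\mathbb{F}_q^{2n}$: $c(D)=\frac12(\dim D-\dim(D\cap D^{\perp_s}))$, $k(D)=n-\dim D+c(D)$, $d(D)=d_s(D^{\perp_s}\setminus(D\cap D^{\perp_s}))$; $D$ gives rise to an EAQECC with parameters $[[n,k(D),d(D);c(D)]]_q$. $D_A\subseteq\mathbb{F}_q^{2n}$ is the code generated by the rows of $\begin{pmatrix}B_t & AB_t\\ B_r & 0\\ 0 & B_r\end{pmatrix}$. *)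

From HB Require Import structures.
From mathcomp Require Import all_boot all_order all_algebra all_field.
Set Implicit Arguments. Unset Strict Implicit. Unset Printing Implicit Defensive.
Import GRing.Theory.
Local Open Scope ring_scope.

(* Codes are represented as row spaces of matrices (mxalgebra, %MS). *)
Section CodeDefs.
Variable F : finFieldType.

Definition edual m n (M : 'M[F]_(m, n)) : 'M[F]_n := kermx M^T.

(* Hamming weight and minimum Hamming distance d_H(<M>).
   The default value n of the min is irrelevant for nonempty index sets
   since all weights are <= n. *)
Definition hwt n (v : 'rV[F]_n) : nat := #|[set j : 'I_n | v 0 j != 0]|.
Definition dH m n (M : 'M[F]_(m, n)) : nat :=
  \big[minn/n]_(v : 'rV[F]_n | (v <= M)%MS && (v != 0)) hwt v.

(* Vectors of F^{2n} are 'rV_(n + n), written (x|y) with x = lsubmx, y = rsubmx. *)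
Definition symp_form n (u v : 'rV[F]_(n + n)) : F :=
  (lsubmx u *m (rsubmx v)^T - lsubmx v *m (rsubmx u)^T) 0 0.

(* Symplectic dual of <M>: {v | forall rows u of M, u .s v = 0}.
   For v = (z|w) and a row u = (x|y) of M,
   v *m col_mx (rsubmx M)^T (-(lsubmx M)^T) has entry z.y - w.x = -(u .s v). *)
Definition sdual m n (M : 'M[F]_(m, n + n)) : 'M[F]_(n + n) :=
  kermx (col_mx (rsubmx M)^T (- (lsubmx M)^T)).

Definition swt n (v : 'rV[F]_(n + n)) : nat :=
  #|[set j : 'I_n | (lsubmx v 0 j != 0) || (rsubmx v 0 j != 0)]|.

Definition cEA m n (M : 'M[F]_(m, n + n)) : nat :=
  (\rank M - \rank (M :&: sdual M)%MS)./2.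
Definition kEA m n (M : 'M[F]_(m, n + n)) : int :=
  (n%:Z - (\rank M)%:Z + (cEA M)%:Z)%R.

Definition ent_c m n (H : 'M[F]_(m, n)) : nat :=
  \rank H - \rank (H :&: edual H)%MS.

Definition DA n r t (Br : 'M[F]_(r, n)) (Bt : 'M[F]_(t, n)) (A : 'M[F]_t)
  : 'M[F]_(t + (r + r), n + n) :=
  col_mx (row_mx Bt (A *m Bt)) (col_mx (row_mx Br 0) (row_mx 0 Br)).

End CodeDefs.

Definition ceil_div (a b : nat) : nat := (a + b - 1) %/ b.

From HB Require Import structures.
From mathcomp Require Import all_boot all_order all_algebra all_field.
From mathcomp Require Import zify.
Import GRing.Theory.
Local Open Scope ring_scope.
Set Implicit Arguments.
Unset Strict Implicit.
Unset Printing Implicit Defensive.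

(* Write G := Br Br^T.  Since Bt is orthogonal to Br and to itself, C C^T is
   diag(G, 0) while the symplectic Gram matrix of D_A is diag(0, [0 G; -G 0]),
   so both entanglement counts equal rank G; D_A has full row rank t + 2r,
   which gives k.
   A vector v = (z|w) of the symplectic dual of D_A satisfies z, w in <Br>^perp
   and w Bt^T = (z Bt^T) A^T.  If z Bt^T = 0, then z, w lie in C^perp and
   swt v >= delta_1.  Otherwise, as A has no eigenvalue, none of the q + 1
   vectors z and w + a z (a in F) vanishes; all lie in <Br>^perp, and every
   coordinate of the symplectic support of v lies in the support of exactly q
   of them, whence (q + 1) delta_2 <= q swt v. *)

Lemma mxrank_sub_capmx_kermx (F : fieldType) m n p
    (M : 'M[F]_(m, n)) (K : 'M[F]_(n, p)) :
  (\rank M - \rank (M :&: kermx K))%N = \rank (M *m K).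
Proof. by rewrite -(mxrank_mul_ker M K) addnK. Qed.

Lemma eigenvalue_tr (F : fieldType) n (A : 'M[F]_n) a :
  eigenvalue A^T a = eigenvalue A a.
Proof.
by rewrite /eigenvalue /eigenspace !kermx_eq0 !row_free_unit -unitmx_tr
  linearB /= tr_scalar_mx trmxK.
Qed.

Lemma pencil_neq0_noeigen (F : fieldType) n t (Bt : 'M[F]_(t, n)) (A : 'M[F]_t)
    (z w : 'rV[F]_n) :
  (forall a, ~~ eigenvalue A a) -> w *m Bt^T = z *m Bt^T *m A^T ->
  z *m Bt^T != 0 -> forall a, w + a *: z != 0.
Proof.
move=> noeig wBt zBt_neq0 a; apply: contraNneq (noeig (- a)) => /eqP.
rewrite addr_eq0 => /eqP w_eq; rewrite -eigenvalue_tr; apply/eigenvalueP.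
by exists (z *m Bt^T); rewrite // -wBt w_eq scaleNr mulNmx scalemxAl.
Qed.

Lemma ceil_div_le a b c : (0 < b)%N -> (a <= b * c)%N -> (ceil_div a b <= c)%N.
Proof. by move=> b_gt0 le_a_bc; rewrite /ceil_div -ltnS ltn_divLR //; lia. Qed.

Lemma mxrank_skew_block (F : fieldType) r (G : 'M[F]_r) :
  \rank (block_mx 0 G (- G) 0) = (\rank G).*2.
Proof.
rewrite block_mxEv -addsmxE addsmxC addsmxE -block_mxEv.
by rewrite rank_diag_block_mx mxrank_opp addnn.
Qed.

Lemma card_set_sum (T : finType) (P : pred T) :
  #|[set x | P x]| = (\sum_x P x)%N.
Proof.
by rewrite -sum1dep_card big_mkcond; apply: eq_bigr => x _; case: (P x).
Qed.

Lemma card_affine_neq0 (F : finFieldType) (x y : F) :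
  ((x != 0%R) + #|[set a : F | (y + a * x != 0)%R]|)%N =
  (#|F| * ((x != 0%R) || (y != 0%R)))%N.
Proof.
have [-> | x_neq0] /= := eqVneq x 0.
  under eq_finset => a do rewrite mulr0 addr0.
  by case: (y != 0); rewrite ?muln0 ?muln1 ?cards0 ?cardsT //.
have -> : [set a | y + a * x != 0] = [set~ - y / x].
  apply/setP => a; rewrite !inE addrC addr_eq0.
  by rewrite (can2_eq (mulfK x_neq0) (divfK x_neq0)) mulNr.
by rewrite cardsC1 muln1 add1n prednK //; apply/card_gt0P; exists 0.
Qed.

(* [minn] has no unit on [nat], but [bigD1] only needs a commutative
   semigroup law. *)
HB.instance Definition _ := SemiGroup.isComLaw.Build nat minn minnA minnC.

Section Codes.
Variable F : finFieldType.

Lemma sub_edual_col_mx m1 m2 n (B1 : 'M[F]_(m1, n)) (B2 : 'M[F]_(m2, n)) p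
    (X : 'M[F]_(p, n)) :
  (X <= edual (col_mx B1 B2))%MS = (X <= edual B1)%MS && (X <= edual B2)%MS.
Proof. by rewrite !sub_kermx tr_col_mx mul_mx_row row_mx_eq0. Qed.

Lemma dH_le_hwt m n (M : 'M[F]_(m, n)) v :
  (v <= M)%MS -> v != 0 -> (dH M <= hwt v)%N.
Proof. by move=> vM v_neq0; rewrite /dH (bigD1 v) ?vM //= geq_minl. Qed.

Lemma hwt_pencil_sum n (z w : 'rV[F]_n) :
  (hwt z + \sum_(a : F) hwt (w + a *: z))%N =
  (#|F| * #|[set j : 'I_n | ((z 0 j != 0) || (w 0 j != 0))%R]|)%N.
Proof.
under eq_bigr => a _ do rewrite /hwt card_set_sum.
rewrite /hwt !card_set_sum big_distrr exchange_big -big_split /=.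
apply: eq_bigr => j _.
by rewrite -card_affine_neq0 card_set_sum; under eq_bigr => a _ do rewrite !mxE.
Qed.

Lemma hwt_lsub_le_swt n (v : 'rV[F]_(n + n)) : (hwt (lsubmx v) <= swt v)%N.
Proof. by apply/subset_leq_card/subsetP => j; rewrite !inE => ->. Qed.

Lemma hwt_rsub_le_swt n (v : 'rV[F]_(n + n)) : (hwt (rsubmx v) <= swt v)%N.
Proof. by apply/subset_leq_card/subsetP => j; rewrite !inE orbC => ->. Qed.

Lemma dH_le_swt m n (M : 'M[F]_(m, n)) (v : 'rV[F]_(n + n)) :
  (lsubmx v <= M)%MS -> (rsubmx v <= M)%MS -> v != 0 -> (dH M <= swt v)%N.
Proof.
move=> zM wM v_neq0; have [z0 | z_neq0] := eqVneq (lsubmx v) 0.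
  have w_neq0 : rsubmx v != 0.
    by apply: contraNneq v_neq0 => w0; rewrite -[v]hsubmxK z0 w0 row_mx0.
  exact: leq_trans (dH_le_hwt wM w_neq0) (hwt_rsub_le_swt v).
exact: leq_trans (dH_le_hwt zM z_neq0) (hwt_lsub_le_swt v).
Qed.

Lemma dH_pencil_le_swt m n (M : 'M[F]_(m, n)) (v : 'rV[F]_(n + n)) :
  (lsubmx v <= M)%MS -> (rsubmx v <= M)%MS -> lsubmx v != 0 ->
  (forall a, rsubmx v + a *: lsubmx v != 0) ->
  ((#|F| + 1) * dH M <= #|F| * swt v)%N.
Proof.
move=> zM wM z_neq0 pencil_neq0.
rewrite /swt -hwt_pencil_sum mulnDl mul1n addnC.
have -> : (#|F| * dH M = \sum_(a : F) dH M)%N by rewrite sum_nat_const.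
apply: leq_add; first exact: dH_le_hwt.
by apply: leq_sum => a _; apply: dH_le_hwt; rewrite ?addmx_sub ?scalemx_sub.
Qed.

Lemma ent_cE m n (H : 'M[F]_(m, n)) : ent_c H = \rank (H *m H^T).
Proof. exact: mxrank_sub_capmx_kermx. Qed.

Lemma cEAE m n (M : 'M[F]_(m, n + n)) :
  cEA M = (\rank (lsubmx M *m (rsubmx M)^T - rsubmx M *m (lsubmx M)^T))./2.
Proof.
by rewrite /cEA /sdual mxrank_sub_capmx_kermx -{1}[M]hsubmxK mul_row_col mulmxN.
Qed.
End Codes.

Section DA.
Variables (F : finFieldType) (n r t : nat).
Variables (Br : 'M[F]_(r, n)) (Bt : 'M[F]_(t, n)) (A : 'M[F]_t).
Local Notation D := (DA Br Bt A).

Lemma DA_row_mx :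
  D = row_mx (col_mx Bt (col_mx Br 0)) (col_mx (A *m Bt) (col_mx 0 Br)).
Proof. by rewrite /DA -!block_mxEv block_mxEh -block_mxEv block_mxEh. Qed.

Lemma sub_sdual_DA (v : 'rV[F]_(n + n)) : (v <= sdual D)%MS ->
  [/\ lsubmx v *m Br^T = 0, rsubmx v *m Br^T = 0
    & rsubmx v *m Bt^T = lsubmx v *m Bt^T *m A^T].
Proof.
rewrite /sdual sub_kermx DA_row_mx row_mxKl row_mxKr -{1}[v]hsubmxK mul_row_col.
rewrite !tr_col_mx trmx0 trmx_mul !opp_row_mx oppr0 !mul_mx_row !mulmx0.
rewrite !add_row_mx !row_mx_eq0 addr0 add0r !mulmxN oppr_eq0 subr_eq0 mulmxA.
by case/and3P => /eqP<- /eqP-> /eqP->.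
Qed.

Lemma row_free_DA :
  row_free Br -> row_free Bt -> (Br :&: Bt)%MS = 0 -> row_free D.
Proof.
move=> freeBr freeBt capBrBt; rewrite -kermx_eq0; apply/rowV0P => u /sub_kermxP.
rewrite -[u]hsubmxK -[rsubmx u]hsubmxK /DA.
move: (lsubmx u) (lsubmx (rsubmx u)) (rsubmx (rsubmx u)) => a b c.
rewrite !mul_row_col !mul_mx_row !mulmx0 !add_row_mx addr0 add0r.
move/eqP; rewrite row_mx_eq0 !addr_eq0 => /andP[/eqP aBt /eqP aABt].
have aBt0 : a *m Bt = 0.
  by apply/eqP; rewrite -submx0 -capBrBt sub_capmx submxMl aBt -mulNmx submxMl.
have a0 : a = 0 by apply: (row_free_inj freeBt); rewrite aBt0 mul0mx.
have b0 : b = 0.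
  apply: (row_free_inj freeBr); apply/eqP.
  by rewrite mul0mx -oppr_eq0 -aBt aBt0.
have c0 : c = 0.
  apply: (row_free_inj freeBr); apply/eqP.
  by rewrite mul0mx -oppr_eq0 -aABt a0 mul0mx.
by rewrite a0 b0 c0 !row_mx0.
Qed.

Hypotheses (BtBt : Bt *m Bt^T = 0) (BtBr : Bt *m Br^T = 0).
Local Notation G := (Br *m Br^T).

Let BrBt : Br *m Bt^T = 0.
Proof. by rewrite -[Br]trmxK -trmx_mul BtBr trmx0. Qed.

Lemma DA_cross_gram :
  lsubmx D *m (rsubmx D)^T = block_mx 0 0 0 (block_mx 0 G 0 0).
Proof.
rewrite DA_row_mx row_mxKl row_mxKr !tr_col_mx trmx0 trmx_mul.
rewrite !mul_col_row mul_mx_row !mulmxA mul_col_mx BtBt BtBr BrBt.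
by rewrite !(mulmx0, mul0mx) row_mx0 col_mx0 mul0mx.
Qed.

Lemma DA_symp_gram : lsubmx D *m (rsubmx D)^T - rsubmx D *m (lsubmx D)^T =
  block_mx 0 0 0 (block_mx 0 G (- G) 0).
Proof.
have G_sym : G^T = G by rewrite trmx_mul trmxK.
rewrite -[rsubmx D *m _]trmxK trmx_mul trmxK DA_cross_gram.
rewrite !tr_block_mx !trmx0 G_sym opp_block_mx add_block_mx.
by rewrite opp_block_mx add_block_mx !subr0 sub0r.
Qed.

Lemma cEA_DA : cEA D = \rank G.
Proof.
rewrite cEAE DA_symp_gram rank_diag_block_mx mxrank0 mxrank_skew_block.
by rewrite doubleK.
Qed.

Lemma ent_c_col_mx : ent_c (col_mx Br Bt) = \rank G.
Proof.
rewrite ent_cE tr_col_mx mul_col_row BtBt BtBr BrBt.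
by rewrite rank_diag_block_mx mxrank0 addn0.
Qed.

End DA.

Theorem theorem2p3 (F : finFieldType) (n r t : nat)
    (Br : 'M[F]_(r, n)) (Bt : 'M[F]_(t, n)) (A : 'M[F]_t) :
  (1 <= n)%N -> (2 <= t)%N ->
  row_free Br -> row_free Bt ->
  (Br :&: Bt)%MS = 0 ->
  (Bt <= edual (col_mx Br Bt))%MS ->
  A \in unitmx ->
  (forall a : F, ~~ eigenvalue A a) ->
  let C := col_mx Br Bt in
  let c := ent_c C in
  let q := #|F| in
  let D := DA Br Bt A in
  [/\ cEA D = c,
      kEA D = (n%:Z - (2 * r)%:Z - t%:Z + c%:Z)%R
    & forall v : 'rV[F]_(n + n),
        (v <= sdual D)%MS -> ~~ (v <= D :&: sdual D)%MS ->
        (minn (dH (edual C)) (ceil_div ((q + 1) * dH (edual Br)) q) <= swt v)%N].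
Proof.
move=> _ _ freeBr freeBt capBrBt BtC _ noeig C c q D.
have [BtBr BtBt] : Bt *m Br^T = 0 /\ Bt *m Bt^T = 0.
  by move: BtC; rewrite sub_edual_col_mx !sub_kermx => /andP[/eqP-> /eqP->].
have cD : cEA D = c by rewrite cEA_DA // /c ent_c_col_mx.
split=> //.
  have /eqP rankD := row_free_DA A freeBr freeBt capBrBt.
  by rewrite /kEA cD rankD; lia.
move=> v vD vDD.
have v_neq0 : v != 0 by apply: contraNneq vDD => ->; rewrite sub0mx.
have [zBr wBr wBt] := sub_sdual_DA vD.
have [zBt0 | zBt_neq0] := eqVneq (lsubmx v *m Bt^T) 0.
  rewrite geq_min; apply/orP; left.
  apply: dH_le_swt => //; rewrite sub_edual_col_mx;
    by apply/andP; split; apply/sub_kermxP; rewrite ?wBt ?zBt0 ?mul0mx.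
have q_gt0 : (0 < q)%N by apply/card_gt0P; exists 0.
rewrite geq_min ceil_div_le ?orbT //.
apply: dH_pencil_le_swt; rewrite ?sub_kermx ?zBr ?wBr //.
  by apply: contraNneq zBt_neq0 => ->; rewrite mul0mx.
exact: pencil_neq0_noeigen noeig wBt zBt_neq0.
Qed.
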